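(* Let $p$ be a prime, $n\ge1$, $d\ge2$, and ${\bf a}_1,\dots,{\bf a}_N\in\mathbb{N}^{n+1}$ with coordinate sums $d$. If $u,v\in U_{\min}$, $\nu\in\mathbb{N}^N$, and $\sum_{j=1}^N\nu_j{\bf a}_j^+=pu-v$, then $\nu_j\le p-1$ for all $j$. In particular, $A_{uv}(\Lambda)\in(\mathbb{Q}\cap\mathbb{Z}_p)[\Lambda]$, so $A_{uv}(\Lambda)$ can be reduced modulo $p$.
   Context: ${\bf a}_j^+=({\bf a}_j,1)\in\mathbb{N}^{n+2}$. $\mu\ge0$ is defined by $\lceil(n+1)/d\rceil=\mu+1$. $U_{\min}$ is the set of $u=(u_0,\dots,u_{n+1})\in\mathbb{N}^{n+2}$ with $\sum_{i=0}^nu_i=du_{n+1}$, $u_i>0$ for all $i$, and $u_{n+1}=\mu+1$. For $u,v\in U_{\min}$, $$A_{uv}(\Lambda)=(-1)^{\mu+1}\sum_{\nu\in\mathbb{N}^N,\ \sum_j\nu_j{\bf a}_j^+=pu-v}\frac{\Lambda_1^{\nu_1}\cdots\Lambda_N^{\nu_N}}{\nu_1!\cdots\nu_N!}\in\mathbb{Q}[\Lambda_1,\dots,\Lambda_N].$$ *)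

From mathcomp Require Import all_boot all_order all_algebra.
From mathcomp Require Import mpoly.
Set Implicit Arguments. Unset Strict Implicit. Unset Printing Implicit Defensive.
Import GRing.Theory Num.Theory.
Local Open Scope ring_scope.

(* Exponent vectors a_1..a_N in N^{n+1} are  a : {ffun 'I_N -> {ffun 'I_n.+1 -> nat}};
   vectors u in N^{n+2} are  u : {ffun 'I_n.+2 -> nat}, coordinate i <-> index i,
   the last coordinate u_{n+1} being  u ord_max. *)

(* mu >= 0 with ceil((n+1)/d) = mu + 1, where ceil((n+1)/d) = (n+d) %/ d for d > 0. *)
Definition mu (n d : nat) : nat := ((n + d) %/ d).-1.

(* a_j^+ = (a_j, 1) in N^{n+2} *)
Definition aplus (n N : nat) (a : {ffun 'I_N -> {ffun 'I_n.+1 -> nat}}) (j : 'I_N)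
  (i : 'I_n.+2) : nat :=
  match unlift ord_max i with Some k => a j k | None => 1%N end.

Definition in_Umin (n d : nat) (u : {ffun 'I_n.+2 -> nat}) : bool :=
  [&& (\sum_(i < n.+2 | i != ord_max) u i == d * u ord_max)%N,
      [forall i, (0 < u i)%N] & u ord_max == (mu n d).+1].

Definition sol_cond (n N p : nat) (a : {ffun 'I_N -> {ffun 'I_n.+1 -> nat}})
  (u v : {ffun 'I_n.+2 -> nat}) (nu : 'I_N -> nat) : bool :=
  [forall i : 'I_n.+2,
    ((\sum_(j < N) nu j * aplus a j i)%N)%:Z == (p * u i)%N%:Z - (v i)%:Z].

(* Every solution nu satisfies
   nu_j <= sum_j nu_j = p u_{n+1} - v_{n+1} <= p u_{n+1} (last coordinate),
   so summing over nu with entries in [0, p u_{n+1}] enumerates all solutions. *)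
Definition A_uv (n N d p : nat) (a : {ffun 'I_N -> {ffun 'I_n.+1 -> nat}})
  (u v : {ffun 'I_n.+2 -> nat}) : {mpoly rat[N]} :=
  \sum_(nu : {ffun 'I_N -> 'I_(p * u ord_max).+1}
         | sol_cond p a u v (fun j => nat_of_ord (nu j)))
     (((-1) ^+ (mu n d).+1 / (\prod_(j < N) ((nu j) `!)%:R)) : rat)
       *: 'X_[[multinom (nat_of_ord (nu j)) | j < N]].

(* If nu_j >= p, then p a_j <= nu_j a_j <= p u - v < p u on the first n+1
   coordinates, so a_j < u there coordinatewise; summing gives
   d + (n+1) <= d u_{n+1} = d ceil((n+1)/d) < d + (n+1), a contradiction.
   Hence every solution nu has entries below p, and the coefficients of A_uv,
   which are +-1 / prod_j nu_j!, have denominators prime to p. *)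

From mathcomp Require Import all_boot all_order all_algebra.
From mathcomp Require Import mpoly.
Set Implicit Arguments. Unset Strict Implicit. Unset Printing Implicit Defensive.
Import GRing.Theory Num.Theory.
Local Open Scope ring_scope.

Lemma prime_dvd_fact (p k : nat) : prime p -> (p %| k`!)%N = (p <= k)%N.
Proof.
move=> p_pr; apply/idP/idP; last by move=> le_pk; rewrite dvdn_fact ?prime_gt0.
elim: k => [|k IHk]; first by rewrite fact0 dvdn1 gtn_eqF ?prime_gt1.
by rewrite factS Euclid_dvdM // => /orP[/dvdn_leq-> // | /IHk /leqW].
Qed.

Lemma prime_ndvd_prod_fact (p : nat) (I : finType) (k : I -> nat) :
  prime p -> (forall i, k i < p)%N -> ~~ (p %| \prod_i (k i)`!)%N.
Proof.
move=> p_pr lt_kp; rewrite Euclid_dvd_prod // big1 // => i _.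
by rewrite prime_dvd_fact // leqNgt lt_kp.
Qed.

Lemma denq_sign_div_nat (k n : nat) : (0 < n)%N -> denq ((-1) ^+ k / n%:R) = n.
Proof.
move=> n_gt0; rewrite -signr_odd denq_mulr_sign.
by rewrite -[n%:R]/((n%:Z)%:~R : rat) denqVz // eqz_nat -lt0n.
Qed.

Lemma inj_multinom_ord (N K : nat) :
  injective (fun nu : {ffun 'I_N -> 'I_K} => [multinom (nu j : nat) | j < N]).
Proof.
move=> nu1 nu2 eq_nu; apply/ffunP => j; apply: val_inj.
by have := congr1 (fun m : 'X_{1..N} => m j) eq_nu; rewrite !mnmE.
Qed.

Lemma mcoeff_sum_injX (n : nat) (R : nzRingType) (I : finType) (P : pred I)
    (c : I -> R) (f : I -> 'X_{1..n}) (m : 'X_{1..n}) (Q : pred R) :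
  injective f -> Q 0 -> (forall i, P i -> Q (c i)) ->
  Q ((\sum_(i | P i) c i *: 'X_[f i])@_m).
Proof.
move=> f_inj Q0 Qc; rewrite raddf_sum /=.
case: (pickP [pred i | P i && (f i == m)]) => [i /andP[Pi /eqP fi_m] | no_i].
  rewrite (bigD1 i) //= big1 => [|k /andP[_ ne_ki]].
    by rewrite mcoeffZ mcoeffX fi_m eqxx mulr1 addr0 Qc.
  by rewrite mcoeffZ mcoeffX -fi_m (inj_eq f_inj) (negbTE ne_ki) mulr0.
rewrite big1 // => k Pk; have /= := no_i k; rewrite Pk /= => ne_fk_m.
by rewrite mcoeffZ mcoeffX ne_fk_m mulr0.
Qed.

Lemma mu_succ (n d : nat) : (0 < d)%N -> (mu n d).+1 = ((n + d) %/ d)%N.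
Proof. by move=> d_gt0; rewrite prednK // divn_gt0 // leq_addl. Qed.

Lemma mul_mu_succ_lt (n d : nat) : (0 < d)%N -> (d * (mu n d).+1 < n.+1 + d)%N.
Proof. by move=> d_gt0; rewrite mu_succ // mulnC addSn ltnS leq_divM. Qed.

Lemma Umin_gt0 (n d : nat) (u : {ffun 'I_n.+2 -> nat}) :
  in_Umin d u -> forall i, (0 < u i)%N.
Proof. by case/and3P=> _ /forallP. Qed.

Lemma sum_Umin (n d : nat) (u : {ffun 'I_n.+2 -> nat}) :
  in_Umin d u -> (\sum_(i < n.+1) u (lift ord_max i) = d * (mu n d).+1)%N.
Proof.
case/and3P=> /eqP sum_u _ /eqP <-.
rewrite -sum_u [RHS]big_mkcond [RHS]big_ord_recr /= eqxx addn0.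
apply: eq_bigr => i _.
have -> : widen_ord (leqnSn n.+1) i = lift ord_max i.
  by apply: val_inj; exact: esym (lift_max i).
by rewrite eq_sym neq_lift.
Qed.

Lemma aplus_lift (n N : nat) (a : {ffun 'I_N -> {ffun 'I_n.+1 -> nat}})
    (j : 'I_N) (i : 'I_n.+1) :
  aplus a j (lift ord_max i) = a j i.
Proof. by rewrite /aplus liftK. Qed.

Section Solutions.

Variables (n N p d : nat) (a : {ffun 'I_N -> {ffun 'I_n.+1 -> nat}}).
Variables (u v : {ffun 'I_n.+2 -> nat}) (nu : 'I_N -> nat).
Hypothesis sol : sol_cond p a u v nu.

Lemma sol_condE i : (\sum_(j < N) nu j * aplus a j i + v i = p * u i)%N.
Proof.
by apply/eqP; rewrite -eqz_nat PoszD (eqP (forallP sol i)) subrK.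
Qed.

Lemma sol_coord_lt (j : 'I_N) (i : 'I_n.+1) :
  (0 < v (lift ord_max i))%N -> (p <= nu j)%N -> (a j i < u (lift ord_max i))%N.
Proof.
move=> v_gt0 le_p_nuj; have := sol_condE (lift ord_max i).
rewrite (bigD1 j) //= aplus_lift -addnA => def_pu.
suff : (p * a j i < p * u (lift ord_max i))%N by rewrite ltn_mul2l => /andP[].
rewrite -def_pu (leq_ltn_trans (leq_mul le_p_nuj (leqnn _))) //.
by rewrite -[X in (X < _)%N]addn0 ltn_add2l ltn_addl.
Qed.

Hypotheses (d_gt0 : (0 < d)%N) (ha : forall j : 'I_N, (\sum_(i < n.+1) a j i)%N = d).
Hypotheses (hu : in_Umin d u) (v_gt0 : forall i, (0 < v i)%N).

Lemma sol_lt (j : 'I_N) : (nu j < p)%N.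
Proof.
rewrite ltnNge; apply/negP => le_p_nuj.
have := mul_mu_succ_lt n d_gt0; rewrite -(sum_Umin hu) -(ha j) addnC.
rewrite -[in X in (_ + X)%N](card_ord n.+1) -sum1_card -big_split /= ltnNge.
rewrite leq_sum // => i _; rewrite addn1; exact: sol_coord_lt.
Qed.

End Solutions.

Theorem lemma1p3 (p n d N : nat) (a : {ffun 'I_N -> {ffun 'I_n.+1 -> nat}})
  (hp : prime p) (hn : (1 <= n)%N) (hd : (2 <= d)%N)
  (ha : forall j : 'I_N, (\sum_(i < n.+1) a j i)%N = d)
  (u v : {ffun 'I_n.+2 -> nat}) (hu : in_Umin d u) (hv : in_Umin d v) :
  (forall nu : 'I_N -> nat, sol_cond p a u v nu -> forall j : 'I_N, (nu j <= p - 1)%N)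
  /\ (forall m : 'X_{1..N}, ~~ (p %| absz (denq ((A_uv d p a u v)@_m)))%N).
Proof.
have d_gt0 : (0 < d)%N by apply: leq_trans hd.
have sol_ltp nu (sol : sol_cond p a u v nu) := sol_lt sol d_gt0 ha hu (Umin_gt0 hv).
split=> [nu sol j | m].
  by rewrite subn1 -ltnS prednK ?prime_gt0 ?(sol_ltp _ sol).
apply: (mcoeff_sum_injX m (Q := fun x : rat => ~~ (p %| `|denq x|)%N)).
- exact: inj_multinom_ord.
- by rewrite dvdn1 gtn_eqF ?prime_gt1.
move=> nu sol; rewrite /= -natr_prod denq_sign_div_nat; last first.
  by apply: prodn_gt0 => j; apply: fact_gt0.
exact: prime_ndvd_prod_fact (sol_ltp _ sol).
Qed.
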